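(* Let $\Gamma$ be the first Grigorchuk group with generators $a,b,c,d$, acting on the right on $\{0,1\}^{\mathbb N}$, and let $\rho=111\cdots$. For a word $w=w_1\cdots w_n$ over $\{a,b,c,d\}$ let $\mathcal O(w)=\{\rho\,w_{i+1}\cdots w_n: i=0,\dots,n\}$, and set $\Sigma(n)=\#\{\mathcal O(w): w\text{ a word over }\{a,b,c,d\},\ |w|\le n\}$. Let $\eta$ be the real root of $t^3+t^2+t-2$ and $\alpha=\log 2/\log(2/\eta)$. Then $\Sigma(n)\preceq\exp(n^\alpha)$.
   Context: The first Grigorchuk group $\Gamma$ is the group of permutations of $\{0,1\}^{\mathbb N}$ (acting on the right) generated by $a,b,c,d$, defined recursively for $x\in\{0,1\}$ and infinite binary sequences $u$ by: $(xu)a=(1-x)u$; $(0u)b=0(ua)$, $(1u)b=1(uc)$; $(0u)c=0(ua)$, $(1u)c=1(ud)$; $(0u)d=0u$, $(1u)d=1(ub)$. For functions $f,g:\mathbb N\to\mathbb R_+$, $g\preceq f$ means there is $C>0$ with $g(n)\le f(Cn)$ for all sufficiently large $n$. *)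

From Stdlib Require Import Reals List ClassicalEpsilon.
Import ListNotations.

Inductive letter := La | Lb | Lc | Ld.

Inductive gstate := Sa | Sb | Sc | Sd | Se.

Definition of_letter (l : letter) : gstate :=
  match l with La => Sa | Lb => Sb | Lc => Sc | Ld => Sd end.

(* Binary digit 0 = false, 1 = true.  step s x = (output digit, next state):
   (xu)a=(1-x)u ; (0u)b=0(ua), (1u)b=1(uc) ; (0u)c=0(ua), (1u)c=1(ud) ;
   (0u)d=0u, (1u)d=1(ub). *)
Definition step (s : gstate) (x : bool) : bool * gstate :=
  match s with
  | Sa => (negb x, Se)
  | Sb => if x then (true, Sc) else (false, Sa)
  | Sc => if x then (true, Sd) else (false, Sa)
  | Sd => if x then (true, Sb) else (false, Se)
  | Se => (x, Se)
  end.

Definition bseq := nat -> bool.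

Fixpoint state_at (s : gstate) (u : bseq) (k : nat) : gstate :=
  match k with
  | O => s
  | S k' => snd (step (state_at s u k') (u k'))
  end.

Definition act_gen (l : letter) (u : bseq) : bseq :=
  fun k => fst (step (state_at (of_letter l) u k) (u k)).

Definition act_word (u : bseq) (w : list letter) : bseq :=
  fold_left (fun v l => act_gen l v) w u.

Definition rho : bseq := fun _ => true.

Definition orbit_mem (w : list letter) (x : bseq) : Prop :=
  exists i, i <= length w /\ forall k, x k = act_word rho (skipn i w) k.

Definition orbit_eq (w w' : list letter) : Prop :=
  forall x, orbit_mem w x <-> orbit_mem w' x.

Fixpoint words_exact (n : nat) : list (list letter) :=
  match n with
  | O => [nil]
  | S n' => flat_map (fun w => map (fun l => l :: w) [La; Lb; Lc; Ld]) (words_exact n')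
  end.

Definition words_upto (n : nat) : list (list letter) :=
  flat_map words_exact (seq 0 (S n)).

Definition orbit_eqb (w w' : list letter) : bool :=
  if excluded_middle_informative (orbit_eq w w') then true else false.

Fixpoint dedup_orbits (l : list (list letter)) : list (list letter) :=
  match l with
  | nil => nil
  | w :: l' => if existsb (orbit_eqb w) l' then dedup_orbits l' else w :: dedup_orbits l'
  end.

Definition Sigma (n : nat) : nat := length (dedup_orbits (words_upto n)).

From Stdlib Require Import Reals List Lia Lra Psatz Bool ZArith.
From Stdlib Require Import FunctionalExtensionality ClassicalEpsilon Classical.
Import ListNotations.

(* Every word is equivalent to [h a y1 a y2 ... a yk] with [h] and the [yi] in the Klein
   group {1, b, c, d}, which fixes [rho]. The orbit of such a word is determined by the
   parity of [k], two bits, and the orbits of the two section words by which it acts on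
   the subtrees below the first digit. Unfolding this [j] times gives a binary code of the
   orbit with [2 ^ j] leaves. With the paper's weights the sections together weigh at most
   [eta] times the word, so the code has length O(2^j + eta^j n); choosing
   (2/eta)^j ~ n makes it O(n^alpha), whence Sigma(n) <= 2^O(n^alpha). *)

Definition act (s : gstate) (u : bseq) : bseq :=
  fun k => fst (step (state_at s u k) (u k)).

Definition bcons (x : bool) (u : bseq) : bseq :=
  fun k => match k with O => x | S k => u k end.

Lemma state_at_bcons s x u k :
  state_at s (bcons x u) (S k) = state_at (snd (step s x)) u k.
Proof.
  induction k as [|k IH]; [reflexivity|].
  transitivity (snd (step (state_at s (bcons x u) (S k)) (u k))); [reflexivity|].
  now rewrite IH.
Qed.

Lemma act_bcons s x u :
  act s (bcons x u) = bcons (fst (step s x)) (act (snd (step s x)) u).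
Proof.
  apply functional_extensionality; intros [|k]; [reflexivity|].
  unfold act. now rewrite state_at_bcons.
Qed.

Lemma act_Se u : act Se u = u.
Proof.
  assert (Hst : forall k, state_at Se u k = Se).
  { induction k as [|k IH]; cbn [state_at]; [|rewrite IH]; reflexivity. }
  apply functional_extensionality; intro k. unfold act. now rewrite Hst.
Qed.

Lemma rho_bcons : rho = bcons true rho.
Proof. apply functional_extensionality; intros [|k]; reflexivity. Qed.

Lemma act_word_cons u l w : act_word u (l :: w) = act_word (act (of_letter l) u) w.
Proof. reflexivity. Qed.

Lemma act_word_app u w1 w2 : act_word u (w1 ++ w2) = act_word (act_word u w1) w2.
Proof. apply fold_left_app. Qed.

(* The products of automaton states that are again states; [step_state_mul] shows that
   this table is closed under taking sections. *)
Definition state_mul (x y : gstate) : option gstate :=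
  match x, y with
  | Se, z | z, Se => Some z
  | Sa, Sa | Sb, Sb | Sc, Sc | Sd, Sd => Some Se
  | Sb, Sc | Sc, Sb => Some Sd
  | Sb, Sd | Sd, Sb => Some Sc
  | Sc, Sd | Sd, Sc => Some Sb
  | _, _ => None
  end.

Lemma step_state_mul x y z b :
  state_mul x y = Some z ->
  fst (step y (fst (step x b))) = fst (step z b) /\
  state_mul (snd (step x b)) (snd (step y (fst (step x b)))) = Some (snd (step z b)).
Proof. destruct x, y, z, b; simpl; intro H; try discriminate; split; reflexivity. Qed.

Lemma act_state_mul x y z u : state_mul x y = Some z -> act y (act x u) = act z u.
Proof.
  intro Hxyz.
  assert (Hst : forall k, state_mul (state_at x u k) (state_at y (act x u) k)
                          = Some (state_at z u k)).
  { induction k as [|k IH]; [exact Hxyz|].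
    exact (proj2 (step_state_mul _ _ _ (u k) IH)). }
  apply functional_extensionality; intro k.
  exact (proj1 (step_state_mul _ _ _ (u k) (Hst k))).
Qed.

(** * The Klein subgroup {1, b, c, d} and the normal form of words *)

Inductive v4 := E | B | C | D.

Definition v4_mul (x y : v4) : v4 :=
  match x, y with
  | E, z | z, E => z
  | B, B | C, C | D, D => E
  | B, C | C, B => D
  | B, D | D, B => C
  | C, D | D, C => B
  end.

Definition v4_state (y : v4) : gstate :=
  match y with E => Se | B => Sb | C => Sc | D => Sd end.

Definition v4_word (y : v4) : list letter :=
  match y with E => [] | B => [Lb] | C => [Lc] | D => [Ld] end.

(* The section at digit 1: b|1 = c, c|1 = d, d|1 = b. *)
Definition v4_rot (y : v4) : v4 :=
  match y with E => E | B => C | C => D | D => B end.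

Lemma act_v4_word u y : act_word u (v4_word y) = act (v4_state y) u.
Proof. destruct y; try reflexivity. symmetry; apply act_Se. Qed.

Lemma state_at_v4_rho y k : state_at (v4_state y) rho k = v4_state (Nat.iter k v4_rot y).
Proof.
  induction k as [|k IH]; [reflexivity|].
  transitivity (snd (step (state_at (v4_state y) rho k) true)); [reflexivity|].
  rewrite IH. simpl Nat.iter. now destruct (Nat.iter k v4_rot y).
Qed.

Lemma act_v4_rho y : act (v4_state y) rho = rho.
Proof.
  apply functional_extensionality; intro k. unfold act. rewrite state_at_v4_rho.
  now destruct (Nat.iter k v4_rot y).
Qed.

Definition alt_word (ys : list v4) : list letter := flat_map (fun y => La :: v4_word y) ys.

Fixpoint reduce (w : list letter) : v4 * list v4 :=
  match w with
  | [] => (E, [])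
  | La :: w => let '(h, ys) := reduce w in (E, h :: ys)
  | Lb :: w => let '(h, ys) := reduce w in (v4_mul B h, ys)
  | Lc :: w => let '(h, ys) := reduce w in (v4_mul C h, ys)
  | Ld :: w => let '(h, ys) := reduce w in (v4_mul D h, ys)
  end.

Definition alt_form (w : list letter) : list v4 := snd (reduce w).

Lemma act_word_reduce w u h ys :
  reduce w = (h, ys) -> act_word u w = act_word u (v4_word h ++ alt_word ys).
Proof.
  revert u h ys; induction w as [|l w IH]; intros u h ys Hw.
  - now injection Hw as <- <-.
  - simpl in Hw. destruct (reduce w) as [h' ys'] eqn:Hr.
    rewrite act_word_cons, (IH _ _ _ eq_refl).
    destruct l; injection Hw as <- <-; [reflexivity| | |];
      rewrite !act_word_app, !act_v4_word; f_equal; apply act_state_mul; now destruct h'.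
Qed.

Definition v4_section (e : bool) (y : v4) : list letter :=
  if e then v4_word (v4_rot y) else match y with B | C => [La] | _ => [] end.

Fixpoint alt_section (e : bool) (ys : list v4) : list letter :=
  match ys with
  | [] => []
  | y :: ys => v4_section (negb e) y ++ alt_section (negb e) ys
  end.

Lemma act_v4_bcons e u y :
  act_word (bcons e u) (v4_word y) = bcons e (act_word u (v4_section e y)).
Proof.
  rewrite act_v4_word, act_bcons.
  destruct y, e; simpl; rewrite ?act_Se; reflexivity.
Qed.

Lemma act_alt_bcons ys e u :
  act_word (bcons e u) (alt_word ys)
  = bcons (xorb e (Nat.odd (length ys))) (act_word u (alt_section e ys)).
Proof.
  revert e u; induction ys as [|y ys IH]; intros e u.
  - simpl. now rewrite xorb_false_r.
  - change (alt_word (y :: ys)) with (La :: v4_word y ++ alt_word ys).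
    rewrite act_word_cons, act_bcons, act_word_app. simpl (step Sa e).
    rewrite act_Se, act_v4_bcons, IH. simpl alt_section. rewrite act_word_app.
    f_equal. simpl length. rewrite Nat.odd_succ, <- Nat.negb_odd.
    now destruct e, (Nat.odd (length ys)).
Qed.

Definition orbit_pt (w : list letter) (x : bseq) : Prop :=
  exists i, i <= length w /\ x = act_word rho (skipn i w).

Lemma orbit_eq_of_orbit_pt w w' :
  (forall x, orbit_pt w x <-> orbit_pt w' x) -> orbit_eq w w'.
Proof.
  intros H x.
  assert (Hpt : forall v, orbit_mem v x <-> orbit_pt v x).
  { intro v. split; intros [i [Hi Hx]]; exists i; split; auto.
    - now apply functional_extensionality.
    - now rewrite Hx. }
  rewrite !Hpt. apply H.
Qed.

Lemma orbit_pt_nil x : orbit_pt [] x <-> x = rho.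
Proof.
  split.
  - now intros [[|i] [_ H]].
  - intros ->. now exists 0.
Qed.

Lemma orbit_pt_cons l w x :
  orbit_pt (l :: w) x <-> x = act_word rho (l :: w) \/ orbit_pt w x.
Proof.
  split.
  - intros [[|i] [Hi H]]; [now left|]. right. exists i. simpl in *. split; [lia|exact H].
  - intros [H|[i [Hi H]]].
    + exists 0. split; [lia|exact H].
    + exists (S i). simpl. split; [lia|exact H].
Qed.

Lemma orbit_pt_self w : orbit_pt w (act_word rho w).
Proof. exists 0. split; [lia|reflexivity]. Qed.

Lemma orbit_pt_cons_fixed l w x :
  l <> La -> (orbit_pt (l :: w) x <-> orbit_pt w x).
Proof.
  intro Hl.
  assert (Hfix : act (of_letter l) rho = rho).
  { destruct l; [contradiction|exact (act_v4_rho B)|exact (act_v4_rho C)|exact (act_v4_rho D)]. }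
  rewrite orbit_pt_cons, act_word_cons, Hfix.
  split; [|now right]. intros [->|H]; [apply orbit_pt_self|exact H].
Qed.

Lemma orbit_pt_v4_app y w x : orbit_pt (v4_word y ++ w) x <-> orbit_pt w x.
Proof. destruct y; [reflexivity|..]; apply orbit_pt_cons_fixed; discriminate. Qed.

Lemma orbit_pt_reduce w h ys x :
  reduce w = (h, ys) -> (orbit_pt w x <-> orbit_pt (alt_word ys) x).
Proof.
  revert h ys; induction w as [|l w IH]; intros h ys Hw.
  - now injection Hw as <- <-.
  - simpl in Hw. destruct (reduce w) as [h' ys'] eqn:Hr.
    destruct l; injection Hw as <- <-;
      [|rewrite orbit_pt_cons_fixed by discriminate; exact (IH _ _ eq_refl)..].
    change (alt_word (h' :: ys')) with (La :: v4_word h' ++ alt_word ys').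
    rewrite !orbit_pt_cons, orbit_pt_v4_app, <- (IH _ _ eq_refl), !act_word_cons.
    now rewrite (act_word_reduce _ _ _ _ Hr).
Qed.

Lemma orbit_pt_alt_form w x : orbit_pt w x <-> orbit_pt (alt_word (alt_form w)) x.
Proof. unfold alt_form. destruct (reduce w) eqn:Hr. exact (orbit_pt_reduce _ _ _ x Hr). Qed.

Lemma orbit_pt_section_false y w x :
  orbit_pt (v4_section false y ++ w) x
  <-> x = act_word rho (v4_section false y ++ w) \/ orbit_pt w x.
Proof.
  destruct y; simpl; try apply orbit_pt_cons.
  all: split; [now right|intros [->|H]; [apply orbit_pt_self|exact H]].
Qed.

(** * The orbit of an alternating word is determined by those of its two sections *)

(* The points [rho (alt_section true (skipn i zs))] with [i] even; those with [i] odd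
   are the [even_section_pt (tl zs)]. *)
Definition even_section_pt (zs : list v4) (p : bseq) : Prop :=
  exists i, i < length zs /\ Nat.even i = true /\ p = act_word rho (alt_section true (skipn i zs)).

Lemma even_section_pt_nil p : ~ even_section_pt [] p.
Proof. intros [i [Hi _]]. simpl in Hi. lia. Qed.

Lemma even_section_pt_cons y ys p :
  even_section_pt (y :: ys) p
  <-> p = act_word rho (alt_section true (y :: ys)) \/ even_section_pt (tl ys) p.
Proof.
  split.
  - intros [[|[|i]] [Hi [He H]]]; [now left|discriminate|].
    right. exists i. destruct ys as [|y' ys]; simpl in *; [lia|]. split; [lia|tauto].
  - intros [H|[i [Hi [He H]]]].
    + exists 0. simpl. split; [lia|tauto].
    + exists (S (S i)). destruct ys as [|y' ys]; simpl in *; [lia|]. split; [lia|tauto].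
Qed.

Lemma orbit_pt_alt_section zs :
  (forall p, orbit_pt (alt_section true zs) p <-> p = rho \/ even_section_pt zs p) /\
  (forall p, orbit_pt (alt_section false zs) p <-> p = rho \/ even_section_pt (tl zs) p).
Proof.
  induction zs as [|y zs [IHt IHf]].
  - split; intro p; simpl; rewrite orbit_pt_nil; pose proof (even_section_pt_nil p); tauto.
  - split; intro p.
    + change (alt_section true (y :: zs)) with (v4_section false y ++ alt_section false zs).
      rewrite orbit_pt_section_false, IHf, even_section_pt_cons. tauto.
    + change (alt_section false (y :: zs)) with (v4_word (v4_rot y) ++ alt_section true zs).
      rewrite orbit_pt_v4_app, IHt. tauto.
Qed.

Lemma even_section_pt_iff zs p :
  even_section_pt zs p
  <-> orbit_pt (alt_section true zs) p /\ (p <> rho \/ even_section_pt zs rho).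
Proof.
  rewrite (proj1 (orbit_pt_alt_section zs)).
  split.
  - intro Hp. split; [now right|].
    destruct (classic (p = rho)) as [->|Hne]; [now right|now left].
  - intros [[->|Hp] Hrho]; [|exact Hp]. now destruct Hrho.
Qed.

Lemma orbit_pt_alt_cons y ys x :
  orbit_pt (alt_word (y :: ys)) x
  <-> x = bcons (Nat.odd (length ys)) (act_word rho (alt_section true (y :: ys)))
      \/ orbit_pt (alt_word ys) x.
Proof.
  change (alt_word (y :: ys)) with (La :: v4_word y ++ alt_word ys).
  rewrite orbit_pt_cons, orbit_pt_v4_app.
  change (La :: v4_word y ++ alt_word ys) with (alt_word (y :: ys)).
  rewrite rho_bcons at 1. rewrite act_alt_bcons. simpl length.
  rewrite Nat.odd_succ, <- Nat.negb_odd. now destruct (Nat.odd (length ys)).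
Qed.

Lemma orbit_pt_alt ys x :
  orbit_pt (alt_word ys) x
  <-> x = rho
      \/ (exists p, even_section_pt ys p /\ x = bcons (negb (Nat.odd (length ys))) p)
      \/ (exists p, even_section_pt (tl ys) p /\ x = bcons (Nat.odd (length ys)) p).
Proof.
  induction ys as [|y ys IH].
  - simpl. rewrite orbit_pt_nil.
    split; [tauto|]. intros [H|[[p [Hp _]]|[p [Hp _]]]]; [exact H|now apply even_section_pt_nil in Hp..].
  - rewrite orbit_pt_alt_cons, IH. simpl length. simpl tl.
    rewrite Nat.odd_succ, <- Nat.negb_odd, negb_involutive.
    setoid_rewrite even_section_pt_cons.
    split.
    + intros [H|[H|[[p [Hp H]]|[p [Hp H]]]]].
      * right; left. eexists; split; [left; reflexivity|exact H].
      * now left.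
      * right; right. now exists p.
      * right; left. exists p. split; [now right|exact H].
    + intros [H|[[p [[->|Hp] H]]|[p [Hp H]]]].
      * right; left; exact H.
      * now left.
      * right; right; right. now exists p.
      * right; right; left. now exists p.
Qed.

Definition bool_of_prop (P : Prop) : bool :=
  if excluded_middle_informative P then true else false.

Lemma bool_of_prop_eq P Q : bool_of_prop P = bool_of_prop Q -> (P <-> Q).
Proof.
  unfold bool_of_prop.
  destruct (excluded_middle_informative P), (excluded_middle_informative Q);
    intro H; try discriminate; tauto.
Qed.

Lemma orbit_pt_alt_determined ys ys' :
  Nat.odd (length ys) = Nat.odd (length ys') ->
  bool_of_prop (even_section_pt ys rho) = bool_of_prop (even_section_pt ys' rho) ->
  bool_of_prop (even_section_pt (tl ys) rho) = bool_of_prop (even_section_pt (tl ys') rho) ->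
  (forall p, orbit_pt (alt_section true ys) p <-> orbit_pt (alt_section true ys') p) ->
  (forall p, orbit_pt (alt_section true (tl ys)) p <-> orbit_pt (alt_section true (tl ys')) p) ->
  forall x, orbit_pt (alt_word ys) x <-> orbit_pt (alt_word ys') x.
Proof.
  intros Hodd Hrho Hrho_tl Hsec Hsec_tl x.
  apply bool_of_prop_eq in Hrho, Hrho_tl.
  assert (Heven : forall p, even_section_pt ys p <-> even_section_pt ys' p).
  { intro p. rewrite !(even_section_pt_iff _ p), Hsec, Hrho. tauto. }
  assert (Heven_tl : forall p, even_section_pt (tl ys) p <-> even_section_pt (tl ys') p).
  { intro p. rewrite !(even_section_pt_iff _ p), Hsec_tl, Hrho_tl. tauto. }
  rewrite !orbit_pt_alt, Hodd.
  setoid_rewrite Heven. setoid_rewrite Heven_tl. reflexivity.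
Qed.

(** * A prefix-free binary code of orbits *)

Definition v4_bit1 (y : v4) : bool := match y with E | B => false | _ => true end.
Definition v4_bit2 (y : v4) : bool := match y with E | C => false | _ => true end.

Fixpoint list_code (ys : list v4) : list bool :=
  match ys with
  | [] => [false]
  | y :: ys => true :: v4_bit1 y :: v4_bit2 y :: list_code ys
  end.

Lemma list_code_prefix_free ys ys' r r' :
  list_code ys ++ r = list_code ys' ++ r' -> ys = ys' /\ r = r'.
Proof.
  revert ys' r r'.
  induction ys as [|y ys IH]; intros [|y' ys'] r r' H; simpl in H; try discriminate.
  - now injection H.
  - injection H as H1 H2 H3. destruct (IH _ _ _ H3) as [-> ->].
    split; [|reflexivity]. f_equal. destruct y, y'; simpl in *; congruence.
Qed.

Fixpoint alt_code (j : nat) (ys : list v4) : list bool :=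
  match j with
  | O => list_code ys
  | S j =>
      Nat.odd (length ys) :: bool_of_prop (even_section_pt ys rho)
        :: bool_of_prop (even_section_pt (tl ys) rho)
        :: alt_code j (alt_form (alt_section true ys))
           ++ alt_code j (alt_form (alt_section true (tl ys)))
  end.

Lemma alt_code_prefix_free j ys ys' r r' :
  alt_code j ys ++ r = alt_code j ys' ++ r' ->
  (forall x, orbit_pt (alt_word ys) x <-> orbit_pt (alt_word ys') x) /\ r = r'.
Proof.
  revert ys ys' r r'.
  induction j as [|j IH]; intros ys ys' r r' H.
  - now destruct (list_code_prefix_free _ _ _ _ H) as [-> ->].
  - simpl in H. injection H as Hodd Hrho Hrho_tl H. rewrite <- !app_assoc in H.
    destruct (IH _ _ _ _ H) as [Hsec H']. destruct (IH _ _ _ _ H') as [Hsec_tl ->].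
    split; [|reflexivity].
    apply orbit_pt_alt_determined; try assumption; intro p.
    + rewrite (orbit_pt_alt_form (alt_section true ys)), (orbit_pt_alt_form (alt_section true ys')).
      apply Hsec.
    + rewrite (orbit_pt_alt_form (alt_section true (tl ys))).
      rewrite (orbit_pt_alt_form (alt_section true (tl ys'))).
      apply Hsec_tl.
Qed.

Definition word_code (j : nat) (w : list letter) : list bool := alt_code j (alt_form w).

Lemma word_code_inj j w w' : word_code j w = word_code j w' -> orbit_eq w w'.
Proof.
  intro H. apply orbit_eq_of_orbit_pt. intro x.
  rewrite (orbit_pt_alt_form w x), (orbit_pt_alt_form w' x).
  apply (alt_code_prefix_free j _ _ [] []). now rewrite !app_nil_r.
Qed.

Fixpoint bool_lists_upto (L : nat) : list (list bool) :=
  match L with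
  | O => [[]]
  | S L => [] :: map (cons true) (bool_lists_upto L) ++ map (cons false) (bool_lists_upto L)
  end.

Lemma length_bool_lists_upto L : length (bool_lists_upto L) = 2 ^ S L - 1.
Proof.
  induction L as [|L IH]; [reflexivity|].
  simpl bool_lists_upto. simpl length. rewrite length_app, !length_map, IH.
  pose proof (Nat.pow_le_mono_r 2 0 L ltac:(lia) ltac:(lia)). simpl in *. lia.
Qed.

Lemma in_bool_lists_upto L l : length l <= L -> In l (bool_lists_upto L).
Proof.
  revert l; induction L as [|L IH]; intros [|b l] Hl; simpl in Hl; try lia; [now left..|].
  right. apply in_or_app. destruct b; [left|right]; apply in_map, IH; lia.
Qed.

Lemma dedup_orbits_incl l : incl (dedup_orbits l) l.
Proof.
  induction l as [|w l IH]; simpl; [apply incl_refl|].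
  destruct (existsb (orbit_eqb w) l).
  - now apply incl_tl.
  - apply incl_cons; [now left|]. now apply incl_tl.
Qed.

Lemma orbit_eqb_true w w' : orbit_eq w w' -> orbit_eqb w w' = true.
Proof. unfold orbit_eqb. now destruct (excluded_middle_informative (orbit_eq w w')). Qed.

Lemma length_dedup_orbits_le (f : list letter -> list bool) (L : nat) (W : list (list letter)) :
  (forall w, In w W -> length (f w) <= L) ->
  (forall w w', f w = f w' -> orbit_eq w w') ->
  length (dedup_orbits W) <= 2 ^ S L.
Proof.
  intros HL Hf.
  assert (Hnodup : NoDup (map f (dedup_orbits W))).
  { clear HL. induction W as [|w l IH]; simpl; [constructor|].
    destruct (existsb (orbit_eqb w) l) eqn:Hex; [exact IH|].
    simpl. constructor; [|exact IH].
    intro Hin. apply in_map_iff in Hin. destruct Hin as [w' [Hw' Hin]].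
    apply dedup_orbits_incl in Hin.
    enough (existsb (orbit_eqb w) l = true) by congruence.
    apply existsb_exists. exists w'. split; [exact Hin|].
    apply orbit_eqb_true, Hf. now symmetry. }
  assert (Hincl : incl (map f (dedup_orbits W)) (bool_lists_upto L)).
  { intros b Hb. apply in_map_iff in Hb. destruct Hb as [w [<- Hw]].
    apply in_bool_lists_upto, HL, dedup_orbits_incl, Hw. }
  pose proof (NoDup_incl_length Hnodup Hincl) as H.
  rewrite length_map, length_bool_lists_upto in H. lia.
Qed.

Lemma length_words_exact k w : In w (words_exact k) -> length w = k.
Proof.
  revert w; induction k as [|k IH]; simpl; intros w H.
  - now destruct H as [<-|[]].
  - apply in_flat_map in H. destruct H as [v [Hv H]].
    simpl in H. destruct H as [<-|[<-|[<-|[<-|[]]]]]; simpl; f_equal; now apply IH.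
Qed.

Lemma length_words_upto n w : In w (words_upto n) -> length w <= n.
Proof.
  unfold words_upto. intro H. apply in_flat_map in H. destruct H as [k [Hk Hw]].
  apply in_seq in Hk. rewrite (length_words_exact k w Hw). lia.
Qed.

(** * A norm contracted by sections *)

Open Scope R_scope.

Section Norm.

Variable eta : R.
Hypothesis Heta : eta ^ 3 + eta ^ 2 + eta - 2 = 0.

Lemma eta_bounds : 4/5 < eta < 1.
Proof.
  assert (Hpos : 0 < eta) by (destruct (Rle_lt_dec eta 0); nra).
  split; nra.
Qed.

(* Modulo [eta^3 + eta^2 + eta = 2] these weights turn each section inequality
   [v4_section_contract] into an equality for [y <> E]. *)
Definition letter_weight (l : letter) : R :=
  match l with La => 1 - eta ^ 3 | Lb => eta ^ 3 | Lc => 1 - eta ^ 2 | Ld => 1 - eta end.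

Definition word_norm (w : list letter) : R := fold_right (fun l s => letter_weight l + s) 0 w.

Lemma letter_weight_bounds l : 0 <= letter_weight l <= 1.
Proof. pose proof eta_bounds. destruct l; simpl; nra. Qed.

Lemma word_norm_app w1 w2 : word_norm (w1 ++ w2) = word_norm w1 + word_norm w2.
Proof. induction w1 as [|l w1 IH]; simpl; [ring|]. unfold word_norm in *. simpl. rewrite IH. ring. Qed.

Lemma word_norm_nonneg w : 0 <= word_norm w.
Proof.
  induction w as [|l w IH]; unfold word_norm in *; simpl; [lra|].
  pose proof (letter_weight_bounds l). lra.
Qed.

Lemma word_norm_le_length w : word_norm w <= INR (length w).
Proof.
  induction w as [|l w IH]; unfold word_norm in *; simpl length; [simpl; lra|].
  rewrite S_INR. pose proof (letter_weight_bounds l). simpl. lra.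
Qed.

Lemma word_norm_v4_mul y z :
  word_norm (v4_word (v4_mul y z)) <= word_norm (v4_word y) + word_norm (v4_word z).
Proof. pose proof eta_bounds. destruct y, z; unfold word_norm; simpl; nra. Qed.

Lemma word_norm_reduce w h ys :
  reduce w = (h, ys) -> word_norm (v4_word h) + word_norm (alt_word ys) <= word_norm w.
Proof.
  revert h ys; induction w as [|l w IH]; intros h ys Hw.
  - injection Hw as <- <-. unfold word_norm. simpl. lra.
  - simpl in Hw. destruct (reduce w) as [h' ys'] eqn:Hr.
    specialize (IH _ _ eq_refl).
    change (word_norm (l :: w)) with (letter_weight l + word_norm w).
    destruct l; injection Hw as <- <-.
    + change (word_norm (alt_word (h' :: ys')))
        with (letter_weight La + word_norm (v4_word h' ++ alt_word ys')).
      rewrite word_norm_app. change (word_norm (v4_word E)) with 0. lra.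
    + pose proof (word_norm_v4_mul B h') as Hmul.
      cbn [v4_mul] in Hmul.
      change (word_norm (v4_word B)) with (letter_weight Lb + 0) in Hmul. lra.
    + pose proof (word_norm_v4_mul C h') as Hmul.
      cbn [v4_mul] in Hmul.
      change (word_norm (v4_word C)) with (letter_weight Lc + 0) in Hmul. lra.
    + pose proof (word_norm_v4_mul D h') as Hmul.
      cbn [v4_mul] in Hmul.
      change (word_norm (v4_word D)) with (letter_weight Ld + 0) in Hmul. lra.
Qed.

Lemma word_norm_alt_form w : word_norm (alt_word (alt_form w)) <= word_norm w.
Proof.
  unfold alt_form. destruct (reduce w) as [h ys] eqn:Hr.
  pose proof (word_norm_reduce _ _ _ Hr). pose proof (word_norm_nonneg (v4_word h)). simpl. lra.
Qed.

Lemma v4_section_contract y :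
  word_norm (v4_section false y) + word_norm (v4_section true y)
  <= eta * word_norm (La :: v4_word y).
Proof. pose proof eta_bounds. destruct y; unfold word_norm; simpl; nra. Qed.

Lemma alt_section_contract ys :
  word_norm (alt_section true ys) + word_norm (alt_section false ys)
  <= eta * word_norm (alt_word ys).
Proof.
  induction ys as [|y ys IH]; [unfold word_norm; simpl; lra|].
  change (alt_section true (y :: ys)) with (v4_section false y ++ alt_section false ys).
  change (alt_section false (y :: ys)) with (v4_section true y ++ alt_section true ys).
  change (alt_word (y :: ys)) with ((La :: v4_word y) ++ alt_word ys).
  rewrite !word_norm_app. pose proof (v4_section_contract y). lra.
Qed.

Lemma word_norm_alt_section_tl ys :
  word_norm (alt_section true (tl ys)) <= word_norm (alt_section false ys).
Proof.
  destruct ys as [|y ys]; [simpl; lra|].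
  change (alt_section false (y :: ys)) with (v4_section true y ++ alt_section true ys).
  rewrite word_norm_app. pose proof (word_norm_nonneg (v4_section true y)). cbn [tl]. lra.
Qed.

Lemma sections_contract ys :
  word_norm (alt_word (alt_form (alt_section true ys)))
  + word_norm (alt_word (alt_form (alt_section true (tl ys))))
  <= eta * word_norm (alt_word ys).
Proof.
  pose proof (word_norm_alt_form (alt_section true ys)).
  pose proof (word_norm_alt_form (alt_section true (tl ys))).
  pose proof (alt_section_contract ys). pose proof (word_norm_alt_section_tl ys). lra.
Qed.

Lemma length_le_word_norm_alt ys : INR (length ys) <= 4 * word_norm (alt_word ys).
Proof.
  pose proof eta_bounds.
  induction ys as [|y ys IH]; [simpl; unfold word_norm; simpl; lra|].
  change (alt_word (y :: ys)) with ((La :: v4_word y) ++ alt_word ys).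
  rewrite word_norm_app, length_cons, S_INR.
  pose proof (word_norm_nonneg (v4_word y)).
  change (word_norm (La :: v4_word y)) with (1 - eta ^ 3 + word_norm (v4_word y)). nra.
Qed.

(* The exponential growth [2 ^ j] of the code tree is paid for by the contraction
   [eta ^ j] of the norm of the leaves. *)
Lemma length_alt_code j ys :
  INR (length (alt_code j ys)) <= 5 * 2 ^ j - 3 + 12 * eta ^ j * word_norm (alt_word ys).
Proof.
  pose proof eta_bounds.
  revert ys; induction j as [|j IH]; intro ys.
  - assert (Hlen : INR (length (list_code ys)) = 3 * INR (length ys) + 1).
    { induction ys as [|y ys IHys]; simpl list_code; simpl length; rewrite ?S_INR;
        [simpl; lra|]. rewrite IHys. lra. }
    simpl alt_code. rewrite Hlen. pose proof (length_le_word_norm_alt ys). simpl. lra.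
  - cbn [alt_code length]. rewrite length_app, !S_INR, plus_INR.
    pose proof (IH (alt_form (alt_section true ys))).
    pose proof (IH (alt_form (alt_section true (tl ys)))).
    pose proof (sections_contract ys).
    assert (0 <= eta ^ j) by (apply pow_le; lra).
    simpl pow. nra.
Qed.

Lemma Sigma_le_pow2 j n L :
  5 * 2 ^ j + 12 * eta ^ j * INR n <= INR L -> (Sigma n <= 2 ^ S L)%nat.
Proof.
  intro HL. pose proof eta_bounds.
  apply (length_dedup_orbits_le (word_code j)); [|apply word_code_inj].
  intros w Hw. apply INR_le.
  pose proof (length_alt_code j (alt_form w)). pose proof (word_norm_alt_form w).
  pose proof (word_norm_le_length w). pose proof (le_INR _ _ (length_words_upto n w Hw)).
  assert (0 <= eta ^ j) by (apply pow_le; lra).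
  unfold word_code. nra.
Qed.

End Norm.

Lemma exists_pow_bracket q x : 1 < q -> 1 <= x -> exists j, q ^ j <= x < q ^ S j.
Proof.
  intros Hq Hx.
  destruct (Pow_x_infinity q ltac:(rewrite Rabs_pos_eq; lra) (x + 1)) as [m Hm].
  specialize (Hm m (le_n m)). rewrite Rabs_pos_eq in Hm by (apply pow_le; lra).
  assert (Hxm : x < q ^ m) by lra. clear Hm.
  induction m as [|m IH]; [simpl in Hxm; lra|].
  destruct (Rlt_or_le x (q ^ m)) as [Hlt|Hle]; [exact (IH Hlt)|now exists m].
Qed.

Lemma exists_nat_between r : 0 <= r -> exists L : nat, r <= INR L <= r + 1.
Proof.
  intro Hr. destruct (archimed r) as [Hup1 Hup2].
  assert (Hup : (0 <= up r)%Z) by (apply le_IZR; lra).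
  exists (Z.to_nat (up r)). rewrite INR_IZR_INZ, Z2Nat.id by exact Hup. lra.
Qed.

Lemma exp_monotone x y : x <= y -> exp x <= exp y.
Proof. intros [Hlt| ->]; [apply Rlt_le, exp_increasing, Hlt|apply Rle_refl]. Qed.

Lemma ln_pos x : 1 < x -> 0 < ln x.
Proof. intro Hx. rewrite <- ln_1. apply ln_increasing; lra. Qed.

Lemma Rpower_root_mul K a x :
  0 < K -> 0 < a -> 0 < x -> Rpower (Rpower K (/ a) * x) a = K * Rpower x a.
Proof.
  intros HK Ha Hx.
  rewrite <- Rpower_mult_distr by (try apply exp_pos; lra).
  rewrite Rpower_mult, Rinv_l, Rpower_1 by lra. reflexivity.
Qed.

Section Growth.

Variable eta : R.
Hypothesis Heta : eta ^ 3 + eta ^ 2 + eta - 2 = 0.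

(* The depth [j] with [(2/eta)^j <= x < (2/eta)^(j+1)]; note [2^j = ((2/eta)^j)^alpha]. *)
Lemma exists_depth x :
  1 <= x -> exists j, 2 ^ j <= Rpower x (ln 2 / ln (2 / eta)) /\ eta ^ j * x <= 2 / eta * 2 ^ j.
Proof.
  intro Hx. pose proof (eta_bounds _ Heta).
  assert (Hq : 1 < 2 / eta) by (apply Rmult_lt_reg_r with eta; [lra|]; field_simplify; lra).
  pose proof (ln_pos _ Hq).
  destruct (exists_pow_bracket _ _ Hq Hx) as [j [Hlow Hhigh]].
  exists j. split.
  - replace (2 ^ j) with (Rpower ((2 / eta) ^ j) (ln 2 / ln (2 / eta))).
    + apply Rle_Rpower_l; [apply Rlt_le, Rdiv_lt_0_compat; [apply ln_pos|]; lra|].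
      split; [apply pow_lt|]; lra.
    + rewrite <- Rpower_pow, Rpower_mult, <- Rpower_pow by lra.
      unfold Rpower. f_equal. field_simplify (INR j * (ln 2 / ln (2 / eta)) * ln (2 / eta)); lra.
  - apply Rlt_le. apply Rlt_le_trans with (eta ^ j * (2 / eta) ^ S j).
    + apply Rmult_lt_compat_l; [apply pow_lt|]; lra.
    + simpl pow. rewrite <- Rmult_assoc, (Rmult_comm (eta ^ j)), Rmult_assoc, <- Rpow_mult_distr.
      replace (eta * (2 / eta)) with 2 by (field; lra). lra.
Qed.

Lemma Sigma_le_exp n :
  (1 <= n)%nat ->
  INR (Sigma n) <= exp ((7 + 12 * (2 / eta)) * ln 2 * Rpower (INR n) (ln 2 / ln (2 / eta))).
Proof.
  intro Hn. pose proof (eta_bounds _ Heta).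
  destruct (exists_depth (INR n)) as [j [H2j Hetaj]]; [apply (le_INR 1 n Hn)|].
  assert (Hpow : 1 <= 2 ^ j) by (apply pow_R1_Rle; lra).
  assert (Heta_j : 0 <= eta ^ j) by (apply pow_le; lra).
  destruct (exists_nat_between (5 * 2 ^ j + 12 * eta ^ j * INR n)) as [L [HL1 HL2]].
  { pose proof (pos_INR n). nra. }
  pose proof (le_INR _ _ (Sigma_le_pow2 _ Heta j n L HL1)) as Hcnt.
  rewrite pow_INR, <- Rpower_pow in Hcnt by (simpl; lra).
  eapply Rle_trans; [exact Hcnt|]. apply exp_monotone.
  assert (Hq : 0 < 2 / eta) by (apply Rdiv_lt_0_compat; lra).
  assert (HSL : INR (S L) <= (7 + 12 * (2 / eta)) * Rpower (INR n) (ln 2 / ln (2 / eta))).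
  { rewrite S_INR. nra. }
  pose proof (ln_pos 2 ltac:(lra)).
  replace (INR 2) with 2 by (simpl; lra).
  apply Rle_trans with ((7 + 12 * (2 / eta)) * Rpower (INR n) (ln 2 / ln (2 / eta)) * ln 2).
  - apply Rmult_le_compat_r; lra.
  - right; ring.
Qed.

End Growth.

Theorem lemma4p9 (eta : R) (Heta : eta ^ 3 + eta ^ 2 + eta - 2 = 0) :
  exists C : R, 0 < C /\
    exists N : nat, forall n : nat, (N <= n)%nat ->
      INR (Sigma n) <= exp (Rpower (C * INR n) (ln 2 / ln (2 / eta))).
Proof.
  pose proof (eta_bounds _ Heta).
  set (K := (7 + 12 * (2 / eta)) * ln 2).
  set (a := ln 2 / ln (2 / eta)).
  assert (HK : 0 < K).
  { apply Rmult_lt_0_compat; [|apply ln_pos]; [apply Rplus_lt_0_compat, Rmult_lt_0_compat|]; 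
      try apply Rdiv_lt_0_compat; lra. }
  assert (Ha : 0 < a).
  { apply Rdiv_lt_0_compat; apply ln_pos; [lra|].
    apply Rmult_lt_reg_r with eta; [lra|]. field_simplify; lra. }
  exists (Rpower K (/ a)). split; [apply exp_pos|].
  exists 1%nat. intros n Hn.
  rewrite Rpower_root_mul by (try apply (lt_0_INR n); lia || lra).
  exact (Sigma_le_exp _ Heta n Hn).
Qed.
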